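(* Let $\Lambda$ be a finite non-uniform rectangular grid. Then there exists a plane geometric graph on the set of vertices of $\Lambda$ whose maximum vertex degree is at most $3$ and whose stretch factor is at most $3\sqrt{2}$.
   Context: A finite non-uniform $m\times k$ rectangular grid $\Lambda$ has as vertices the $mk$ intersection points of $m$ horizontal lines and $k$ vertical lines, where the spacings between consecutive horizontal lines and between consecutive vertical lines are arbitrary. A geometric graph has straight-segment edges weighted by Euclidean length; its stretch factor is the smallest $t$ such that the shortest-path distance between any two vertices $u,v$ is at most $t|uv|$. A graph is plane if no two edges cross. *)

From mathcomp Require Import all_boot all_order all_algebra.
From mathcomp Require Import reals.
Set Implicit Arguments. Unset Strict Implicit. Unset Printing Implicit Defensive.
Import Order.TTheory GRing.Theory Num.Theory.
Local Open Scope ring_scope.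

Section Geom.
Variable R : realType.

Definition dist (a b : R * R) : R :=
  Num.sqrt ((a.1 - b.1) ^+ 2 + (a.2 - b.2) ^+ 2).

Definition on_seg (a b z : R * R) : Prop :=
  exists2 t : R, 0 <= t <= 1 &
    z = (a.1 + t * (b.1 - a.1), a.2 + t * (b.2 - a.2)).

Variables (V : finType) (pos : V -> R * R) (e : rel V).

Definition simple_graph : Prop := symmetric e /\ irreflexive e.

Definition max_degree_le (d : nat) : Prop :=
  forall v : V, (#|[set w | e v w]| <= d)%N.

Definition plane : Prop :=
  forall a b c d : V, e a b -> e c d -> [set a; b] != [set c; d] ->
    forall z, on_seg (pos a) (pos b) z -> on_seg (pos c) (pos d) z ->
      exists2 w, w \in [set a; b] :&: [set c; d] & z = pos w.

Definition path_length (u : V) (s : seq V) : R :=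
  \sum_(i < size s) dist (pos (nth u (u :: s) i)) (pos (nth u s i)).

(* stretch factor at most t: every pair u, v is joined by a path in e
   of Euclidean length at most t |uv| (hence the shortest-path distance,
   a minimum over finitely many simple paths, is at most t |uv|) *)
Definition stretch_factor_le (t : R) : Prop :=
  forall u v : V, exists s : seq V,
    [/\ path e u s, last u s = v & path_length u s <= t * dist (pos u) (pos v)].

End Geom.

From mathcomp Require Import all_boot all_order all_algebra reals.
From mathcomp Require Import zify ring lra.
Import Order.TTheory GRing.Theory Num.Theory.
Set Implicit Arguments. Unset Strict Implicit. Unset Printing Implicit Defensive.

(* Start from the full grid graph and delete some edges. A deleted edge [e] is
   bypassed along the other three sides of a unit cell containing it whose
   sides perpendicular to [e] are not longer than [e]; this detour has length
   at most 3|e|. Following a monotone grid path from u to v therefore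
   gives stretch 3 for the L1 distance, hence 3 sqrt 2 for the Euclidean one,
   and planarity is inherited from the grid.
   Only edges on odd staircases are deleted, staircase s consisting of the
   edges leaving the diagonal i + j = s rightwards or upwards: consecutive
   edges of a staircase share a vertex, and the sides of a cell lie two by two
   on two consecutive staircases. On each odd staircase we delete a set of
   edges meeting every consecutive pair, which removes an edge at every
   interior vertex and so bounds the degree by 3, such that every deleted edge
   has a kept, not longer neighbour on its staircase; these two span a cell
   whose other two sides, lying on an even staircase, are kept.
   Such a set exists on any path whose links are oriented towards their
   shorter end: it is the kernel of an acyclic digraph, built here from the
   right end by a two-step induction. *)

Section DeletionsOnPaths.
Variables (link left_shorter : nat -> bool) (N : nat).
Hypothesis link_lt : forall t, link t -> t < N.

(* Only positions from [a] on count, so that a solution on a suffix can be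
   extended to the left. *)
Definition supported a (del : nat -> bool) t :=
  [&& a < t, link t.-1, left_shorter t.-1 & ~~ del t.-1] ||
  [&& link t, ~~ left_shorter t & ~~ del t.+1].

Definition deletion_from a del := forall t, a <= t ->
  (link t -> del t || del t.+1) /\ (del t -> supported a del t).

Definition keeps a := {del | deletion_from a del & ~~ del a}.

Definition leans a := link a && ~~ left_shorter a.

Definition keeps_or_leans a := (keeps a + leans a * keeps a.+1)%type.

Definition upd (del : nat -> bool) a v t := if t == a then v else del t.

Lemma upd_same del a v : upd del a v a = v.
Proof. by rewrite /upd eqxx. Qed.

Lemma upd_other del a v t : t != a -> upd del a v t = del t.
Proof. by move=> /negbTE; rewrite /upd => ->. Qed.

Lemma deletion_from_prefix a b del del' : a <= b ->
    deletion_from b del -> (forall t, b <= t -> del' t = del t) ->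
    (forall t, a <= t < b ->
      (link t -> del' t || del' t.+1) /\ (del' t -> supported a del' t)) ->
  deletion_from a del'.
Proof.
move=> le_ab D del'E pre t le_at.
have [lt_tb|le_bt] := ltnP t b; first by apply: pre; rewrite le_at.
have [cover sup] := D t le_bt; rewrite !del'E ?(leqW le_bt) //; split=> // /sup.
case/orP=> [/and4P[lt_bt l s d]|/and3P[l s d]]; apply/orP; [left|right].
  have -> : del' t.-1 = del t.-1 by apply: del'E; lia.
  by rewrite l s d !andbT; lia.
by rewrite del'E ?l ?s ?d // leqW.
Qed.

Lemma keeps_beyond a : N <= a -> keeps a.
Proof.
move=> le_Na; exists (fun _ => false) => // t le_at.
by split=> // /link_lt; lia.
Qed.

Lemma keeps_isolated a : ~~ link a -> {del | deletion_from a.+1 del} -> keeps a.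
Proof.
move=> /negbTE nla [del D]; exists (upd del a false); last by rewrite upd_same.
apply: deletion_from_prefix (leqnSn a) D _ _ => [t lt_at|t /andP[le_at lt_ta]].
  by rewrite upd_other //; lia.
have -> : t = a by lia.
by rewrite nla upd_same.
Qed.

Lemma keeps_by_deleting_next a del : deletion_from a.+2 del ->
    (link a && left_shorter a) || (leans a.+1 && ~~ del a.+2) -> keeps a.
Proof.
move=> D sup1; set del' := upd (upd del a.+1 true) a false.
have del'0 : del' a = false by rewrite /del' upd_same.
have del'1 : del' a.+1 = true by rewrite /del' upd_other ?upd_same //; lia.
have del'2 : del' a.+2 = del a.+2 by rewrite /del' !upd_other //; lia.
exists del'; last by rewrite del'0.
apply: deletion_from_prefix (leqW (leqnSn a)) D _ _ => [t lt_at|t].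
  by rewrite /del' !upd_other //; lia.
move=> /andP[le_at lt_ta]; have [->|->] : t = a \/ t = a.+1 by lia.
  by rewrite del'1 orbT del'0.
rewrite /supported /= del'0 del'1 del'2 ltnSn; split=> // _.
by case/orP: sup1 => [/andP[-> ->] //|/andP[/andP[-> ->] ->]]; rewrite orbT.
Qed.

Lemma deletion_of_keeps_or_leans a : keeps_or_leans a -> {del | deletion_from a del}.
Proof.
case=> [[del D _]|[lean_a [del D keep_a1]]]; first by exists del.
exists (upd del a true).
apply: deletion_from_prefix (leqnSn a) D _ _ => [t lt_at|t /andP[le_at lt_ta]].
  by rewrite upd_other //; lia.
have -> : t = a by lia.
rewrite /supported upd_same upd_other; last by lia.
by case/andP: lean_a => -> ->; rewrite keep_a1 orbT.
Qed.

Lemma keeps_or_leans_step a : keeps_or_leans a.+1 -> keeps_or_leans a.+2 -> keeps_or_leans a.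
Proof.
move=> S1 S2; have [la|nla] := boolP (link a); last first.
  by left; apply: keeps_isolated nla (deletion_of_keeps_or_leans S1).
have [sa|nsa] := boolP (left_shorter a).
  have [del D] := deletion_of_keeps_or_leans S2.
  by left; apply: keeps_by_deleting_next D _; rewrite la sa.
have lean_a : leans a by rewrite /leans la nsa.
case: S1 => [keep_a1|[lean_a1 [del D keep_a2]]]; first by right.
by left; apply: keeps_by_deleting_next D _; rewrite lean_a1 keep_a2 orbT.
Qed.

Lemma keeps_or_leans_all a : keeps_or_leans a.
Proof.
have S n b : N <= n + b -> (keeps_or_leans b * keeps_or_leans b.+1)%type.
  elim: n b => [|n IHn] b le_Nb; first by split; left; apply: keeps_beyond; lia.
  have [S1 S2] := IHn b.+1 (ltac:(lia)).
  by split; first exact: keeps_or_leans_step.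
by case: (S N a (leq_addr _ _)).
Qed.

Definition deletion_exists : {del | deletion_from 0 del} :=
  deletion_of_keeps_or_leans (keeps_or_leans_all 0).

End DeletionsOnPaths.

Section Staircase.
(* [wide i j]: the vertical sides of the cell with lower-left corner (i, j) are
   not longer than its horizontal sides. *)
Variables (k m : nat) (wide : nat -> nat -> bool).

Definition hedge_in i j := (i.+1 < k) && (j < m).
Definition vedge_in i j := (i < k) && (j.+1 < m).

(* Position [t] of staircase [s] is the edge leaving (t./2, s - t./2)
   rightwards if [t] is odd and upwards if [t] is even. *)
Definition stair_edge s t :=
  (t./2 <= s) && (if odd t then hedge_in else vedge_in) t./2 (s - t./2).
Definition stair_link s t := stair_edge s t && stair_edge s t.+1.
Definition stair_shorter s t :=
  if odd t then ~~ wide t./2 (s - t./2).-1 else wide t./2 (s - t./2).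

Lemma stair_edge_odd s i : stair_edge s i.*2.+1 = (i <= s) && hedge_in i (s - i).
Proof. by rewrite /stair_edge oddS odd_double (_ : (i.*2.+1)./2 = i) //; lia. Qed.

Lemma stair_edge_even s i : stair_edge s i.*2 = (i <= s) && vedge_in i (s - i).
Proof. by rewrite /stair_edge odd_double doubleK. Qed.

Lemma stair_shorter_odd s i : stair_shorter s i.*2.+1 = ~~ wide i (s - i).-1.
Proof. by rewrite /stair_shorter oddS odd_double (_ : (i.*2.+1)./2 = i) //; lia. Qed.

Lemma stair_shorter_even s i : stair_shorter s i.*2 = wide i (s - i).
Proof. by rewrite /stair_shorter odd_double doubleK. Qed.

Lemma stair_link_lt s t : stair_link s t -> t < k.*2.
Proof. by case/andP=> /andP[_]; case: ifP => _ /andP[]; lia. Qed.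

Definition stair_del s := sval (deletion_exists (stair_shorter s) (@stair_link_lt s)).

Lemma stair_del_spec s t : (stair_link s t -> stair_del s t || stair_del s t.+1) /\
  (stair_del s t -> supported (stair_link s) (stair_shorter s) 0 (stair_del s) t).
Proof. exact: (svalP (deletion_exists (stair_shorter s) (@stair_link_lt s))). Qed.

Definition hdel i j := odd (i + j) && stair_del (i + j) i.*2.+1.
Definition vdel i j := odd (i + j) && stair_del (i + j) i.*2.

Lemma hdel_odd i j : hdel i j -> odd (i + j).
Proof. by case/andP. Qed.

Lemma vdel_odd i j : vdel i j -> odd (i + j).
Proof. by case/andP. Qed.

Lemma del_cover i j : 0 < i -> i.+1 < k -> 0 < j -> j.+1 < m ->
  [|| hdel i j, hdel i.-1 j, vdel i j | vdel i j.-1].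
Proof.
move=> i_gt0 lt_ik j_gt0 lt_jm; rewrite /hdel /vdel.
have [odd_ij|even_ij] := boolP (odd (i + j)).
  have /(proj1 (stair_del_spec _ _)) : stair_link (i + j) i.*2.
    by rewrite /stair_link stair_edge_even stair_edge_odd /hedge_in /vedge_in; lia.
  by case/orP=> ->; rewrite ?orbT.
have s_eq : i + j.-1 = i.-1 + j by lia.
have t_eq : (i.-1.*2.+1).+1 = i.*2 by lia.
have odd_s : odd (i.-1 + j) by move: even_ij; rewrite -s_eq; lia.
have /(proj1 (stair_del_spec _ _)) : stair_link (i.-1 + j) i.-1.*2.+1.
  by rewrite /stair_link t_eq stair_edge_even stair_edge_odd /hedge_in /vedge_in; lia.
by rewrite t_eq s_eq odd_s => /orP[] ->; rewrite ?orbT.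
Qed.

Lemma hdel_support i j : hdel i j ->
  (j.+1 < m /\ wide i j /\ ~~ vdel i j) \/ (0 < j /\ wide i j.-1 /\ ~~ vdel i.+1 j.-1).
Proof.
case/andP=> _ /(proj2 (stair_del_spec _ _)).
case/orP=> [/and4P[_ /andP[e _] sh nd]|/and3P[/andP[_ e] sh nd]].
  move: e sh; rewrite /= stair_edge_even stair_shorter_even addKn /vedge_in => e sh.
  by left; rewrite /vdel (negbTE nd) andbF; split=> //; lia.
move: e sh nd; rewrite -doubleS stair_edge_even stair_shorter_odd addKn negbK /vedge_in.
move=> e sh nd; have s_eq : i.+1 + j.-1 = i + j by lia.
by right; rewrite /vdel s_eq (negbTE nd) andbF; split=> //; lia.
Qed.

Lemma vdel_support i j : vdel i j ->
  (i.+1 < k /\ ~~ wide i j /\ ~~ hdel i j) \/ (0 < i /\ ~~ wide i.-1 j /\ ~~ hdel i.-1 j.+1).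
Proof.
case/andP=> _ /(proj2 (stair_del_spec _ _)).
case/orP=> [/and4P[i_gt0 /andP[e _] sh nd]|/and3P[/andP[_ e] sh nd]].
  have t_eq : i.*2.-1 = i.-1.*2.+1 by lia.
  have s_eq : i.-1 + j.+1 = i + j by lia.
  move: e sh nd; rewrite t_eq stair_edge_odd stair_shorter_odd /hedge_in => e sh nd.
  right; rewrite /hdel s_eq (negbTE nd) andbF; split; first by lia.
  by rewrite (_ : (i + j - i.-1).-1 = j) in sh; last lia.
move: e sh; rewrite stair_edge_odd stair_shorter_even addKn /hedge_in => e sh.
by left; rewrite /hdel (negbTE nd) andbF; split=> //; lia.
Qed.

End Staircase.

Local Open Scope ring_scope.

Section PlaneGeometry.
Variable R : realType.
Implicit Types (a b z : R * R) (x y : R).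

Lemma dist_sym a b : dist a b = dist b a.
Proof. by rewrite /dist -sqrrN opprB -(sqrrN (a.2 - b.2)) opprB. Qed.

Lemma dist_row x x' y : dist (x, y) (x', y) = `|x - x'|.
Proof. by rewrite /dist subrr expr0n addr0 sqrtr_sqr. Qed.

Lemma dist_col x y y' : dist (x, y) (x, y') = `|y - y'|.
Proof. by rewrite /dist subrr expr0n add0r sqrtr_sqr. Qed.

Lemma l1_le_sqrt2_dist a b : `|a.1 - b.1| + `|a.2 - b.2| <= Num.sqrt 2 * dist a b.
Proof.
rewrite /dist -sqrtrM // -[leLHS]ger0_norm ?addr_ge0 // -sqrtr_sqr.
rewrite ler_sqrt ?mulr_ge0 ?addr_ge0 ?sqr_ge0 //.
rewrite -[(a.1 - b.1) ^+ 2]real_normK ?num_real // -[(a.2 - b.2) ^+ 2]real_normK ?num_real //.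
have := sqr_ge0 (`|a.1 - b.1| - `|a.2 - b.2|); rewrite !expr2; nra.
Qed.

Lemma on_seg_sym a b z : on_seg a b z -> on_seg b a z.
Proof.
case=> t /andP[t_ge0 t_le1] ->; exists (1 - t); first by apply/andP; split; lra.
by congr pair; ring.
Qed.

End PlaneGeometry.

Section PathsWithin.
Variables (R : realType) (V : finType) (pos : V -> R * R) (e : rel V).

Lemma path_length_nil u : path_length pos u [::] = 0.
Proof. by rewrite /path_length big_ord0. Qed.

Lemma path_length_cons u w s :
  path_length pos u (w :: s) = dist (pos u) (pos w) + path_length pos w s.
Proof.
rewrite /path_length big_ord_recl; congr (_ + _); apply: eq_bigr => i _ /=.
by rewrite add0n; congr (dist (pos _) (pos _)); apply: set_nth_default => //=; apply: leqW.
Qed.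

Lemma path_length_cat u s1 s2 :
  path_length pos u (s1 ++ s2) = path_length pos u s1 + path_length pos (last u s1) s2.
Proof.
elim: s1 u => [|w s1 IHs] u /=; first by rewrite path_length_nil add0r.
by rewrite !path_length_cons IHs addrA.
Qed.

Definition path_within (c : R) (u v : V) :=
  exists s, [/\ path e u s, last u s = v & path_length pos u s <= c].

Lemma path_within_refl c u : 0 <= c -> path_within c u u.
Proof. by exists [::]; rewrite path_length_nil. Qed.

Lemma path_within_edge u v : e u v -> path_within (dist (pos u) (pos v)) u v.
Proof. by exists [:: v]; rewrite /= andbT path_length_cons path_length_nil addr0. Qed.

Lemma path_within_le c c' u v : c <= c' -> path_within c u v -> path_within c' u v.
Proof. by move=> le_cc' [s [p l len]]; exists s; split=> //; apply: le_trans le_cc'. Qed.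

Lemma path_within_trans c1 c2 u w v :
  path_within c1 u w -> path_within c2 w v -> path_within (c1 + c2) u v.
Proof.
move=> [s1 [p1 l1 len1]] [s2 [p2 l2 len2]]; exists (s1 ++ s2).
by rewrite cat_path last_cat path_length_cat l1 p1 p2 l2 lerD.
Qed.

Lemma path_within_path3 a b c d : e a b -> e b c -> e c d ->
  path_within (dist (pos a) (pos b) + dist (pos b) (pos c) + dist (pos c) (pos d)) a d.
Proof. by move=> ab bc cd; do 2?apply: path_within_trans; apply: path_within_edge. Qed.

Lemma path_within_sym c u v : symmetric e -> path_within c u v -> path_within c v u.
Proof.
move=> e_sym [s [p <-]]; elim: s u c p => [|w s IHs] u c /=.
  by rewrite path_length_nil => _; apply: path_within_refl.
case/andP=> uw p; rewrite path_length_cons addrC dist_sym => len.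
apply: path_within_le len _; apply: path_within_trans (IHs _ _ p (lexx _)) _.
by apply: path_within_edge; rewrite e_sym.
Qed.

End PathsWithin.

Lemma plane_subrel (R : realType) (V : finType) (pos : V -> R * R) (e e' : rel V) :
  subrel e e' -> plane pos e' -> plane pos e.
Proof. by move=> ee' pl a b c d /ee' ab /ee' cd; apply: pl. Qed.

Section Increasing.
Variables (R : realType) (f : nat -> R) (n : nat).
Hypothesis f_lt : forall i j, (i < j)%N -> (j <= n)%N -> f i < f j.

Lemma incr_le i j : (i <= j)%N -> (j <= n)%N -> f i <= f j.
Proof. by rewrite leq_eqVlt => /predU1P[->//|lt_ij] le_jn; exact/ltW/f_lt. Qed.

Lemma incr_inj i j : (i <= n)%N -> (j <= n)%N -> f i = f j -> i = j.
Proof.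
move=> le_in le_jn fij; case: (ltngtP i j) => // [lt_ij|lt_ji].
  by have := f_lt lt_ij le_jn; rewrite fij ltxx.
by have := f_lt lt_ji le_in; rewrite fij ltxx.
Qed.

Lemma incr_between i a : (i < n)%N -> (a <= n)%N -> f i <= f a <= f i.+1 -> a = i \/ a = i.+1.
Proof.
move=> lt_in le_an /andP[lo hi]; case: (ltnP a i) => [lt_ai|le_ia].
  by have := f_lt lt_ai (ltnW lt_in); rewrite ltNge lo.
case: (ltnP i.+1 a) => [lt_ia|le_ai]; last by lia.
by have := f_lt lt_ia le_an; rewrite ltNge hi.
Qed.

Lemma incr_overlap i i' z : (i < n)%N -> (i' < n)%N ->
    f i <= z <= f i.+1 -> f i' <= z <= f i'.+1 ->
  [\/ i = i', i' = i.+1 /\ z = f i' | i = i'.+1 /\ z = f i].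
Proof.
wlog le_ii' : i i' / (i <= i')%N.
  move=> wlog lt_in lt_i'n zi zi'; case: (leqP i i') => [le|/ltnW le].
    exact: wlog.
  by case: (wlog i' i le lt_i'n lt_in zi' zi) => [->|[-> ->]|[-> ->]]; [apply: Or31|apply: Or33|apply: Or32].
move=> lt_in lt_i'n /andP[_ hi] /andP[lo _]; case: (ltnP i i') => [lt_ii'|le]; last by apply: Or31; lia.
have lo' := incr_le lt_ii' (ltnW lt_i'n).
have zE : z = f i' by apply/eqP; rewrite eq_le lo andbT (le_trans hi lo').
by apply: Or32; split=> //; apply: (incr_inj (ltnW lt_i'n) lt_in); apply/eqP; rewrite eq_le lo' -zE hi.
Qed.

Lemma incr_abs i j : (i <= j)%N -> (j <= n)%N -> `|f j - f i| = f j - f i.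
Proof. by move=> le_ij le_jn; rewrite ger0_norm // subr_ge0 incr_le. Qed.

Definition toward (i j : nat) := if (i < j)%N then i.+1 else i.-1.

Lemma incr_abs_toward i j : (i <= n)%N -> (j <= n)%N -> i != j ->
  `|f i - f j| = `|f i - f (toward i j)| + `|f (toward i j) - f j|.
Proof.
move=> le_in le_jn neq_ij; rewrite /toward; case: ltnP => [lt_ij|le_ji].
  have [le1 le2] : f i <= f i.+1 /\ f i.+1 <= f j by split; apply: incr_le; lia.
  by rewrite !ler0_norm ?subr_le0 //; lra.
have [le1 le2] : f j <= f i.-1 /\ f i.-1 <= f i by split; apply: incr_le; lia.
by rewrite !ger0_norm ?subr_ge0 //; lra.
Qed.

End Increasing.

Lemma card_rel_le_size (V : finType) (e : rel V) v (s : seq V) :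
  (forall w, e v w -> w \in s) -> (#|[set w | e v w]| <= size s)%N.
Proof.
move=> sub; apply: leq_trans (card_size s); apply: subset_leq_card.
by apply/subsetP => w; rewrite inE => /sub.
Qed.

Section Grid.
Variables (R : realType) (K M : nat) (xs : 'I_K.+1 -> R) (ys : 'I_M.+1 -> R).
Hypotheses (xs_lt : forall i j : 'I_K.+1, (i < j)%N -> xs i < xs j)
           (ys_lt : forall i j : 'I_M.+1, (i < j)%N -> ys i < ys j).

Local Notation V := ('I_K.+1 * 'I_M.+1)%type.

Definition pos (p : V) := (xs p.1, ys p.2).
Definition vtx i j : V := (inord i, inord j).
Definition X i := xs (inord i).
Definition Y j := ys (inord j).

Lemma pos_vtx i j : pos (vtx i j) = (X i, Y j).
Proof. by []. Qed.

Lemma vtx_val (p : V) : vtx p.1 p.2 = p.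
Proof. by rewrite /vtx !inord_val; case: p. Qed.

Lemma X_lt i j : (i < j)%N -> (j <= K)%N -> X i < X j.
Proof. by move=> lt_ij le_jK; apply: xs_lt; rewrite !inordK //; lia. Qed.

Lemma Y_lt i j : (i < j)%N -> (j <= M)%N -> Y i < Y j.
Proof. by move=> lt_ij le_jM; apply: ys_lt; rewrite !inordK //; lia. Qed.

Definition wide i j := Y j.+1 - Y j <= X i.+1 - X i.

Local Notation hdel := (hdel K.+1 M.+1 wide).
Local Notation vdel := (vdel K.+1 M.+1 wide).

Definition hstep (p q : V) := (p.2 == q.2 :> nat) && (p.1.+1 == q.1).
Definition vstep (p q : V) := (p.1 == q.1 :> nat) && (p.2.+1 == q.2).
Definition adjacent p q := [|| hstep p q, hstep q p, vstep p q | vstep q p].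

Definition kept p q := (hstep p q && ~~ hdel p.1 p.2) || (vstep p q && ~~ vdel p.1 p.2).
Definition spanner p q := kept p q || kept q p.

Lemma spanner_sym : symmetric spanner.
Proof. by move=> p q; rewrite /spanner orbC. Qed.

Lemma spanner_irr : irreflexive spanner.
Proof. by move=> p; rewrite /spanner orbb; apply/negP; case/orP=> /andP[/andP[_ /eqP]]; lia. Qed.

Lemma spanner_adjacent : subrel spanner adjacent.
Proof. by move=> p q; rewrite /adjacent; case/orP=> /orP[]/andP[-> _]; rewrite ?orbT. Qed.

Lemma spanner_right i j : (i < K)%N -> (j <= M)%N -> ~~ hdel i j ->
  spanner (vtx i j) (vtx i.+1 j).
Proof.
move=> lt_iK le_jM kept_ij.
by rewrite /spanner /kept /hstep /= !inordK ?eqxx ?kept_ij //; lia.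
Qed.

Lemma spanner_up i j : (i <= K)%N -> (j < M)%N -> ~~ vdel i j ->
  spanner (vtx i j) (vtx i j.+1).
Proof.
move=> le_iK lt_jM kept_ij.
by rewrite /spanner /kept /vstep /= !inordK ?eqxx ?kept_ij ?orbT //; lia.
Qed.

Lemma vtx_eq (p : V) i j : p.1 = i :> nat -> p.2 = j :> nat -> p = vtx i j.
Proof. by move=> <- <-; rewrite vtx_val. Qed.

Lemma vtx_inj (p q : V) : p.1 = q.1 :> nat -> p.2 = q.2 :> nat -> p = q.
Proof. by move=> e1 e2; rewrite (vtx_eq e1 e2) vtx_val. Qed.

Lemma spanner_cases v w : spanner v w -> [\/
  [/\ w = vtx v.1.+1 v.2, (v.1 < K)%N & ~~ hdel v.1 v.2],
  [/\ w = vtx v.1.-1 v.2, (0 < v.1)%N & ~~ hdel v.1.-1 v.2],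
  [/\ w = vtx v.1 v.2.+1, (v.2 < M)%N & ~~ vdel v.1 v.2] |
  [/\ w = vtx v.1 v.2.-1, (0 < v.2)%N & ~~ vdel v.1 v.2.-1]].
Proof.
have := ltn_ord w.1; have := ltn_ord w.2; move=> w2 w1.
case/orP=> /orP[] /andP[/andP[/eqnP e /eqnP e'] kept_vw].
- apply: Or41; split=> //; last by lia.
  by apply: vtx_eq; rewrite ?e ?e'.
- apply: Or43; split=> //; last by lia.
  by apply: vtx_eq; rewrite ?e ?e'.
- by apply: Or42; rewrite -e' -e /= vtx_val.
- by apply: Or44; rewrite -e' -e /= vtx_val.
Qed.

Lemma missing_direction (v : V) : [||
  ((v.1 == K :> nat) || hdel v.1 v.2), ((v.1 == 0 :> nat) || hdel v.1.-1 v.2),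
  ((v.2 == M :> nat) || vdel v.1 v.2) | ((v.2 == 0 :> nat) || vdel v.1 v.2.-1)].
Proof.
have [boundary|interior] :=
  boolP [|| v.1 == K :> nat, v.1 == 0 :> nat, v.2 == M :> nat | v.2 == 0 :> nat].
  by case/or4P: boundary => ->; rewrite ?orbT.
have := ltn_ord v.1; have := ltn_ord v.2 => lt_v2 lt_v1.
have : [|| hdel v.1 v.2, hdel v.1.-1 v.2, vdel v.1 v.2 | vdel v.1 v.2.-1].
  by apply: del_cover; lia.
by case/or4P=> ->; rewrite ?orbT.
Qed.

Lemma spanner_degree : max_degree_le spanner 3.
Proof.
move=> v; case/or4P: (missing_direction v) => miss; [
  apply: (@card_rel_le_size _ _ _ [:: vtx v.1.-1 v.2; vtx v.1 v.2.+1; vtx v.1 v.2.-1]) |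
  apply: (@card_rel_le_size _ _ _ [:: vtx v.1.+1 v.2; vtx v.1 v.2.+1; vtx v.1 v.2.-1]) |
  apply: (@card_rel_le_size _ _ _ [:: vtx v.1.+1 v.2; vtx v.1.-1 v.2; vtx v.1 v.2.-1]) |
  apply: (@card_rel_le_size _ _ _ [:: vtx v.1.+1 v.2; vtx v.1.-1 v.2; vtx v.1 v.2.+1])];
by move=> w /spanner_cases[] [-> lt cut]; rewrite !inE ?eqxx ?orbT //;
  exfalso; move: miss; rewrite (negbTE cut) orbF => /eqnP; lia.
Qed.

Local Notation within := (path_within pos spanner).

Lemma dist_right i j : (i < K)%N -> dist (pos (vtx i j)) (pos (vtx i.+1 j)) = X i.+1 - X i.
Proof. by move=> lt_iK; rewrite !pos_vtx dist_row distrC (incr_abs X_lt). Qed.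

Lemma dist_up i j : (j < M)%N -> dist (pos (vtx i j)) (pos (vtx i j.+1)) = Y j.+1 - Y j.
Proof. by move=> lt_jM; rewrite !pos_vtx dist_col distrC (incr_abs Y_lt). Qed.

Lemma right_within i j : (i < K)%N -> (j <= M)%N ->
  within (3 * (X i.+1 - X i)) (vtx i j) (vtx i.+1 j).
Proof.
move=> lt_iK le_jM; have dX_ge0 : 0 <= X i.+1 - X i by rewrite subr_ge0 (incr_le X_lt).
have [cut|kept] := boolP (hdel i j); last first.
  apply: path_within_le _ (path_within_edge pos (spanner_right lt_iK le_jM kept)).
  by rewrite dist_right //; lra.
have odd_ij := hdel_odd cut.
case: (hdel_support cut) => [[lt_jM [wide_ij kept_l]]|[j_gt0 [wide_ij kept_r]]];
  rewrite /wide in wide_ij.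
  have e1 : spanner (vtx i j) (vtx i j.+1) by apply: spanner_up => //; lia.
  have e2 : spanner (vtx i j.+1) (vtx i.+1 j.+1).
    by apply: spanner_right; try lia; apply/negP => /hdel_odd; lia.
  have e3 : spanner (vtx i.+1 j.+1) (vtx i.+1 j).
    by rewrite spanner_sym; apply: spanner_up; try lia; apply/negP => /vdel_odd; lia.
  apply: path_within_le _ (path_within_path3 pos e1 e2 e3).
  by rewrite [dist (pos (vtx i.+1 j.+1)) _]dist_sym !dist_up ?dist_right //; try lia; lra.
have {j_gt0}[j' j_eq] : exists j', j = j'.+1 by exists j.-1; lia.
rewrite {}j_eq /= in le_jM odd_ij cut wide_ij kept_r *.
have e1 : spanner (vtx i j'.+1) (vtx i j').
  by rewrite spanner_sym; apply: spanner_up; try lia; apply/negP => /vdel_odd; lia.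
have e2 : spanner (vtx i j') (vtx i.+1 j').
  by apply: spanner_right; try lia; apply/negP => /hdel_odd; lia.
have e3 : spanner (vtx i.+1 j') (vtx i.+1 j'.+1) by apply: spanner_up.
apply: path_within_le _ (path_within_path3 pos e1 e2 e3).
by rewrite [dist (pos (vtx i j'.+1)) _]dist_sym !dist_up ?dist_right //; try lia; lra.
Qed.

Lemma up_within i j : (i <= K)%N -> (j < M)%N ->
  within (3 * (Y j.+1 - Y j)) (vtx i j) (vtx i j.+1).
Proof.
move=> le_iK lt_jM; have dY_ge0 : 0 <= Y j.+1 - Y j by rewrite subr_ge0 (incr_le Y_lt).
have [cut|kept] := boolP (vdel i j); last first.
  apply: path_within_le _ (path_within_edge pos (spanner_up le_iK lt_jM kept)).
  by rewrite dist_up //; lra.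
have odd_ij := vdel_odd cut.
case: (vdel_support cut) => [[lt_iK [narrow_ij kept_b]]|[i_gt0 [narrow_ij kept_t]]];
  rewrite /wide -ltNge in narrow_ij.
  have e1 : spanner (vtx i j) (vtx i.+1 j) by apply: spanner_right => //; lia.
  have e2 : spanner (vtx i.+1 j) (vtx i.+1 j.+1).
    by apply: spanner_up; try lia; apply/negP => /vdel_odd; lia.
  have e3 : spanner (vtx i.+1 j.+1) (vtx i j.+1).
    by rewrite spanner_sym; apply: spanner_right; try lia; apply/negP => /hdel_odd; lia.
  apply: path_within_le _ (path_within_path3 pos e1 e2 e3).
  by rewrite [dist (pos (vtx i.+1 j.+1)) _]dist_sym !dist_right ?dist_up //; try lia; lra.
have {i_gt0}[i' i_eq] : exists i', i = i'.+1 by exists i.-1; lia.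
rewrite {}i_eq /= in le_iK odd_ij cut narrow_ij kept_t *.
have e1 : spanner (vtx i'.+1 j) (vtx i' j).
  by rewrite spanner_sym; apply: spanner_right; try lia; apply/negP => /hdel_odd; lia.
have e2 : spanner (vtx i' j) (vtx i' j.+1).
  by apply: spanner_up; try lia; apply/negP => /vdel_odd; lia.
have e3 : spanner (vtx i' j.+1) (vtx i'.+1 j.+1) by apply: spanner_right.
apply: path_within_le _ (path_within_path3 pos e1 e2 e3).
by rewrite [dist (pos (vtx i'.+1 j)) _]dist_sym !dist_right ?dist_up //; try lia; lra.
Qed.

Lemma row_toward_within i i' j : (i <= K)%N -> (i' <= K)%N -> i != i' -> (j <= M)%N ->
  within (3 * `|X i - X (toward i i')|) (vtx i j) (vtx (toward i i') j).
Proof.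
move=> le_iK le_i'K ne_ii' le_jM; rewrite /toward; case: ltnP => [lt_ii'|le_i'i].
  have lt_iK : (i < K)%N by lia.
  by rewrite distrC (incr_abs X_lt (leqnSn i) lt_iK); apply: right_within.
have [i0 i_eq] : exists i0, i = i0.+1 by exists i.-1; lia.
rewrite {}i_eq /= in le_iK *; rewrite (incr_abs X_lt (leqnSn i0) le_iK).
by apply: path_within_sym spanner_sym _; apply: right_within.
Qed.

Lemma col_toward_within i j j' : (i <= K)%N -> (j <= M)%N -> (j' <= M)%N -> j != j' ->
  within (3 * `|Y j - Y (toward j j')|) (vtx i j) (vtx i (toward j j')).
Proof.
move=> le_iK le_jM le_j'M ne_jj'; rewrite /toward; case: ltnP => [lt_jj'|le_j'j].
  have lt_jM : (j < M)%N by lia.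
  by rewrite distrC (incr_abs Y_lt (leqnSn j) lt_jM); apply: up_within.
have [j0 j_eq] : exists j0, j = j0.+1 by exists j.-1; lia.
rewrite {}j_eq /= in le_jM *; rewrite (incr_abs Y_lt (leqnSn j0) le_jM).
by apply: path_within_sym spanner_sym _; apply: up_within.
Qed.

Lemma l1_within_vtx n i j i' j' : (i - i' + (i' - i) + (j - j') + (j' - j) <= n)%N ->
    (i <= K)%N -> (i' <= K)%N -> (j <= M)%N -> (j' <= M)%N ->
  within (3 * (`|X i - X i'| + `|Y j - Y j'|)) (vtx i j) (vtx i' j').
Proof.
elim: n i j => [|n IHn] i j le_dn le_iK le_i'K le_jM le_j'M.
  have [-> ->] : i = i' /\ j = j' by lia.
  by apply: path_within_refl; rewrite !subrr normr0 addr0 mulr0.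
have [->|ne_ii'] := eqVneq i i'; last first.
  have [le_tK le_tn] : (toward i i' <= K /\
      toward i i' - i' + (i' - toward i i') + (j - j') + (j' - j) <= n)%N.
    by rewrite /toward; case: ltnP; lia.
  rewrite (incr_abs_toward X_lt le_iK le_i'K ne_ii') -addrA mulrDr.
  exact: path_within_trans (row_toward_within le_iK le_i'K ne_ii' le_jM) (IHn _ _ le_tn _ _ _ _).
have [->|ne_jj'] := eqVneq j j'.
  by apply: path_within_refl; rewrite !subrr normr0 addr0 mulr0.
have [le_tM le_tn] : (toward j j' <= M /\
    i' - i' + (i' - i') + (toward j j' - j') + (j' - toward j j') <= n)%N.
  by rewrite /toward; case: ltnP; lia.
rewrite (incr_abs_toward Y_lt le_jM le_j'M ne_jj') subrr normr0 add0r mulrDr.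
have := IHn i' _ le_tn le_i'K le_i'K le_tM le_j'M; rewrite subrr normr0 add0r.
exact: path_within_trans (col_toward_within le_i'K le_jM le_j'M ne_jj').
Qed.

Lemma l1_within (u v : V) : within (3 * (`|xs u.1 - xs v.1| + `|ys u.2 - ys v.2|)) u v.
Proof.
have := @l1_within_vtx _ u.1 u.2 v.1 v.2 (leqnn _).
by rewrite /X /Y !inord_val !vtx_val; apply; rewrite -ltnS.
Qed.

Lemma spanner_stretch : stretch_factor_le pos spanner (3 * Num.sqrt 2).
Proof.
move=> u v; apply: path_within_le _ (l1_within u v).
by rewrite -mulrA ler_pM2l //; apply: (l1_le_sqrt2_dist (pos u) (pos v)).
Qed.

Lemma pos_eq z (p : V) : z.1 = X p.1 -> z.2 = Y p.2 -> z = pos p.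
Proof. by case: z => x y /= -> ->; rewrite /X /Y !inord_val. Qed.

Lemma on_seg_hstep p q z : hstep p q -> on_seg (pos p) (pos q) z ->
  [/\ (p.1 < K)%N, z.2 = Y p.2 & X p.1 <= z.1 <= X p.1.+1].
Proof.
case/andP=> /eqnP/val_inj e2 /eqnP e1 [t /andP[t_ge0 t_le1] ->].
have lt_pK : (p.1 < K)%N by have := ltn_ord q.1; lia.
have := incr_le X_lt (leqnSn p.1) lt_pK.
rewrite e1 /X /Y !inord_val /= -e2 subrr mulr0 addr0 => le_pq.
by split; rewrite -?e1 -?e2 //; apply/andP; split; nra.
Qed.

Lemma on_seg_vstep p q z : vstep p q -> on_seg (pos p) (pos q) z ->
  [/\ (p.2 < M)%N, z.1 = X p.1 & Y p.2 <= z.2 <= Y p.2.+1].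
Proof.
case/andP=> /eqnP/val_inj e1 /eqnP e2 [t /andP[t_ge0 t_le1] ->].
have lt_pM : (p.2 < M)%N by have := ltn_ord q.2; lia.
have := incr_le Y_lt (leqnSn p.2) lt_pM.
rewrite e2 /X /Y !inord_val /= -e1 subrr mulr0 addr0 => le_pq.
by split; rewrite -?e1 -?e2 //; apply/andP; split; nra.
Qed.

Lemma plane_hh a b c d z : hstep a b -> hstep c d -> [set a; b] != [set c; d] ->
    on_seg (pos a) (pos b) z -> on_seg (pos c) (pos d) z ->
  exists2 w, w \in [set a; b] :&: [set c; d] & z = pos w.
Proof.
move=> ab cd ne /(on_seg_hstep ab)[lt_aK za2 za1] /(on_seg_hstep cd)[lt_cK zc2 zc1].
case/andP: ab cd => /eqnP b2 /eqnP b1 /andP[/eqnP d2 /eqnP d1].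
have e2 : a.2 = c.2 :> nat by apply: (incr_inj Y_lt); rewrite -?za2 -?zc2 // -ltnS.
case: (incr_overlap X_lt lt_aK lt_cK za1 zc1) => [e1|[e1 ze]|[e1 ze]].
- have ac : a = c by apply: vtx_inj; lia.
  have bd : b = d by apply: vtx_inj; lia.
  by rewrite ac bd eqxx in ne.
- exists b; last by apply: pos_eq; rewrite ?ze -?b2 ?za2 // -b1 e1.
  have bc : b = c by apply: vtx_inj; lia.
  by rewrite !inE bc !eqxx orbT.
- exists a; last by apply: pos_eq.
  have ad : a = d by apply: vtx_inj; lia.
  by rewrite !inE ad !eqxx orbT.
Qed.

Lemma plane_vv a b c d z : vstep a b -> vstep c d -> [set a; b] != [set c; d] ->
    on_seg (pos a) (pos b) z -> on_seg (pos c) (pos d) z ->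
  exists2 w, w \in [set a; b] :&: [set c; d] & z = pos w.
Proof.
move=> ab cd ne /(on_seg_vstep ab)[lt_aM za1 za2] /(on_seg_vstep cd)[lt_cM zc1 zc2].
case/andP: ab cd => /eqnP b1 /eqnP b2 /andP[/eqnP d1 /eqnP d2].
have e1 : a.1 = c.1 :> nat by apply: (incr_inj X_lt); rewrite -?za1 -?zc1 // -ltnS.
case: (incr_overlap Y_lt lt_aM lt_cM za2 zc2) => [e2|[e2 ze]|[e2 ze]].
- have ac : a = c by apply: vtx_inj; lia.
  have bd : b = d by apply: vtx_inj; lia.
  by rewrite ac bd eqxx in ne.
- exists b; last by apply: pos_eq; rewrite ?ze -?b1 ?za1 // -b2 e2.
  have bc : b = c by apply: vtx_inj; lia.
  by rewrite !inE bc !eqxx orbT.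
- exists a; last by apply: pos_eq.
  have ad : a = d by apply: vtx_inj; lia.
  by rewrite !inE ad !eqxx orbT.
Qed.

Lemma plane_hv a b c d z : hstep a b -> vstep c d ->
    on_seg (pos a) (pos b) z -> on_seg (pos c) (pos d) z ->
  exists2 w, w \in [set a; b] :&: [set c; d] & z = pos w.
Proof.
move=> ab cd /(on_seg_hstep ab)[lt_aK za2 za1] /(on_seg_vstep cd)[lt_cM zc1 zc2].
case/andP: ab cd => /eqnP b2 /eqnP b1 /andP[/eqnP d1 /eqnP d2].
have le_cK : (c.1 <= K)%N by rewrite -ltnS.
have le_aM : (a.2 <= M)%N by rewrite -ltnS.
have x_in : X a.1 <= X c.1 <= X a.1.+1 by rewrite -zc1.
have y_in : Y c.2 <= Y a.2 <= Y c.2.+1 by rewrite -za2.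
exists (c.1, a.2); last exact: pos_eq.
rewrite in_setI; apply/andP; split.
  case: (incr_between X_lt lt_aK le_cK x_in) => e1;
    [rewrite (_ : (c.1, a.2) = a) ?set21 | rewrite (_ : (c.1, a.2) = b) ?set22] => //;
    by apply: vtx_inj; rewrite /= ?e1 ?b1 ?b2.
case: (incr_between Y_lt lt_cM le_aM y_in) => e2;
  [rewrite (_ : (c.1, a.2) = c) ?set21 | rewrite (_ : (c.1, a.2) = d) ?set22] => //;
  by apply: vtx_inj; rewrite /= ?e2 ?d1 ?d2.
Qed.

Lemma grid_plane : plane pos adjacent.
Proof.
have step_or p q : adjacent p q -> (hstep p q || vstep p q) \/ (hstep q p || vstep q p).
  by case/or4P=> ->; rewrite ?orbT; [left|right|left|right].
move=> a b c d ab cd ne z zab zcd.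
wlog {ab} st_ab : a b ne zab / hstep a b || vstep a b.
  move=> wlog; case: (step_or a b ab); first exact: wlog.
  move=> st_ba; rewrite [[set a; b]]setUC.
  by apply: (wlog b a _ (on_seg_sym zab) st_ba); rewrite setUC.
wlog {cd} st_cd : c d ne zcd / hstep c d || vstep c d.
  move=> wlog; case: (step_or c d cd); first exact: wlog.
  move=> st_dc; rewrite [[set c; d]]setUC.
  by apply: (wlog d c _ (on_seg_sym zcd) st_dc); rewrite [[set d; c]]setUC.
case/orP: st_ab => ab; case/orP: st_cd => cd.
- exact: plane_hh.
- exact: plane_hv.
- by rewrite setIC; apply: plane_hv.
- exact: plane_vv.
Qed.

End Grid.

Lemma void_vertices (R : realType) (V : finType) (pos : V -> R * R) (e : rel V) t d :
  (V -> False) -> [/\ simple_graph e, max_degree_le e d, plane pos e & stretch_factor_le pos e t].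
Proof. by move=> void; do ?split; move=> v; case: (void v). Qed.

Unset Implicit Arguments.

Theorem theorem7 (R : realType) (k m : nat)
    (xs : 'I_k -> R) (ys : 'I_m -> R)
    (hxs : forall i j : 'I_k, (i < j)%N -> xs i < xs j)
    (hys : forall i j : 'I_m, (i < j)%N -> ys i < ys j) :
  exists e : rel ('I_k * 'I_m),
    let pos := fun p : 'I_k * 'I_m => (xs p.1, ys p.2) in
    [/\ simple_graph e, max_degree_le e 3, plane pos e &
        stretch_factor_le pos e (3 * Num.sqrt 2)].
Proof.
case: k xs hxs => [|K] xs hxs.
  by exists (fun _ _ => false); apply: void_vertices => -[[]].
case: m ys hys => [|M] ys hys.
  by exists (fun _ _ => false); apply: void_vertices => -[_ []].
exists (spanner xs ys); split.
- by split; [apply: spanner_sym | apply: spanner_irr].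
- exact: spanner_degree.
- exact: plane_subrel (@spanner_adjacent _ _ _ xs ys) (grid_plane hxs hys).
- exact: spanner_stretch.
Qed.
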